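(* Let $f_u,f_v,g_u,g_v\in\mathbb{R}$, $D_u,D_v>0$, $\beta>0$ and $\ell_0:=\ell(u_0)\in\mathbb{R}$, and set $$J_0=\begin{pmatrix} f_u & f_v\\ g_u & g_v\end{pmatrix},\qquad L=\begin{pmatrix} D_u & -\beta\ell_0\\ 0 & D_v\end{pmatrix},\qquad J_k=J_0-k^2L\quad (k\ge 0).$$ Assume $J_0$ is stable, i.e. $f_u+g_v<0$ and $f_ug_v-f_vg_u>0$. Define $A=D_ug_v+D_vf_u$, $A_1=\sqrt{D_uD_v}\ge 0$, $A_2=\sqrt{\det(J_0)}>0$ and $A_3=|f_v-g_u|\ge 0$. Then $J_k$ is reactive (for some wavenumber $k\neq 0$) if any one of the following conditions holds: (Case 1) $|\beta\,\ell_0|>2A_1$; (Case 2) $|\beta\,\ell_0|\le 2A_1$ and $J_0$ is reactive (equivalently $A_3>2A_2$); (Case 3) $|\beta\,\ell_0|\le 2A_1$, $J_0$ is not reactive (equivalently $A_3\le 2A_2$), and $$\sqrt{A_1^2-\frac{\beta^2\ell_0^2}{4}}\,\sqrt{4A_2^2-A_3^2}-\frac{(f_v+g_u)\beta\,\ell_0}{2}<A<0.$$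
   Context: This concerns the reaction–diffusion–chemotaxis system $\partial_t u=D_u\Delta u-\beta\nabla\cdot(\ell(u)\nabla v)+f(u,v)$, $\partial_t v=D_v\Delta v+g(u,v)$, linearized at a spatially homogeneous equilibrium $(u_0,v_0)$ (with $f(u_0,v_0)=g(u_0,v_0)=0$); $J_0$ is the Jacobian of $(f,g)$ at $(u_0,v_0)$ with entries $f_u=\partial f/\partial u(u_0,v_0)$ etc., and after Fourier transform in space the linearized dynamics of a mode with wavenumber $k=\|\boldsymbol\omega\|$ is $\widetilde{\mathbf w}_t=J_k\widetilde{\mathbf w}$. A real square matrix $M$ is reactive if $\max\lambda\big((M+M^T)/2\big)>0$, i.e. the largest eigenvalue of its Hermitian part is positive; ''$J_k$ is reactive'' means this holds for $J_k$ for at least one $k\neq0$. *)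

From mathcomp Require Import all_boot all_order all_algebra.
From mathcomp Require Import reals.
Set Implicit Arguments. Unset Strict Implicit. Unset Printing Implicit Defensive.
Import Order.TTheory GRing.Theory Num.Theory.
Local Open Scope ring_scope.

Definition herm_part (R : realType) (n : nat) (M : 'M[R]_n) : 'M[R]_n :=
  (2%:R)^-1 *: (M + M^T).

(* M is reactive iff the largest eigenvalue of (M + M^T)/2 is positive.
   Since (M+M^T)/2 is real symmetric, its eigenvalues are real and (for n>0)
   exist, so "largest eigenvalue > 0" is literally "some eigenvalue > 0". *)
Definition reactive (R : realType) (n : nat) (M : 'M[R]_n) : Prop :=
  exists lambda : R, 0 < lambda /\ eigenvalue (herm_part M) lambda.

Definition mx2 (R : realType) (a b c d : R) : 'M[R]_2 :=
  \matrix_(i < 2, j < 2)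
    (if i == 0 :> nat then (if j == 0 :> nat then a else b)
     else (if j == 0 :> nat then c else d)).

Definition Jk (R : realType) (fu fv gu gv Du Dv beta l0 k : R) : 'M[R]_2 :=
  mx2 fu fv gu gv - (k ^+ 2) *: mx2 Du (- (beta * l0)) 0 Dv.

(* A real 2x2 matrix [M] is reactive iff its symmetric part is not negative
   semidefinite.  Every [J_k] has negative trace, so [J_k] is reactive iff the
   symmetric part has negative determinant; with [x = k^2] this determinant is
   [-(a x^2 - b x + c)], where [a = A1^2 - (beta l0)^2/4],
   [b = A + (f_v + g_u) beta l0 / 2] and [4 c = 4 A2^2 - A3^2].  It remains to
   find [x > 0] with [a x^2 - b x + c < 0]: take [x] large in Case 1 ([a < 0]),
   small in Case 2 ([c < 0], which is exactly the reactivity of [J_0]), and the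
   vertex [b / 2a] in Case 3 (large [x] if [a = 0]), where the hypothesis says
   [b > sqrt (4 a c)]. *)

From mathcomp Require Import all_boot all_order all_algebra.
From mathcomp Require Import reals ring lra.
Set Implicit Arguments. Unset Strict Implicit. Unset Printing Implicit Defensive.
Import Order.TTheory GRing.Theory Num.Theory.
Local Open Scope ring_scope.

Lemma det_mx2 (R : comNzRingType) (A : 'M[R]_2) :
  \det A = A 0 0 * A 1 1 - A 0 1 * A 1 0.
Proof.
rewrite (expand_det_row _ 0) !big_ord_recl big_ord0 /cofactor !det_mx11 !mxE /=.
have -> : lift 0 0 = 1 :> 'I_2 by apply: val_inj.
have -> : lift 1 0 = 0 :> 'I_2 by apply: val_inj.
by rewrite /= expr0 expr1 mul1r mulN1r addr0 mulrN.
Qed.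

Lemma mxtrace_mx2 (R : nmodType) (A : 'M[R]_2) : \tr A = A 0 0 + A 1 1.
Proof.
rewrite /mxtrace !big_ord_recl big_ord0 addr0.
by have -> : lift 0 0 = 1 :> 'I_2 by apply: val_inj.
Qed.

Lemma eigenvalue_mx2 (F : fieldType) (A : 'M[F]_2) a :
  eigenvalue A a = (a ^+ 2 - \tr A * a + \det A == 0).
Proof.
have lead1 : (char_poly A)`_2 = 1.
  by have /monicP := char_poly_monic A; rewrite /lead_coef size_char_poly.
rewrite eigenvalue_root_char /root (@horner_coef_wide _ 3) ?size_char_poly //.
rewrite !big_ord_recl big_ord0 /= lead1 (char_poly_trace A) // char_poly_det.
by congr (_ == 0); rewrite /bump /=; ring.
Qed.

Lemma exists_pos_quad_lt0 (R : realFieldType) (a b c : R) :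
  [\/ a < 0, c < 0 | [/\ 0 <= a, 0 < b & 4 * a * c < b ^+ 2]] ->
  exists2 x, 0 < x & a * x ^+ 2 - b * x + c < 0.
Proof.
have nNb := ler_norm (- b); rewrite normrN in nNb.
have nc := ler_norm c; have na := ler_norm a; have na' := normr_ge0 a.
have nb' := normr_ge0 b; have nc' := normr_ge0 c.
case=> [a_lt0 | c_lt0 | [a_ge0 b_gt0 disc]].
- pose N : R := `|b| + `|c| + 1; pose x := 1 + N / - a.
  have ax : a * x = a - N by rewrite /x; field; rewrite ltr0_neq0.
  have x_ge1 : 1 <= x by rewrite /x lerDl divr_ge0 // /N; lra.
  exists x; first lra.
  have -> : a * x ^+ 2 - b * x + c = x * (a * x - b) + c by ring.
  have : 0 <= (x - 1) * (N + b - a) by rewrite mulr_ge0 // /N; lra.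
  rewrite ax /N; lra.
- pose m : R := `|a| + `|b| + 1 - c; pose x := - c / m.
  have m_gt0 : 0 < m by rewrite /m; lra.
  have mx : m * x = - c by rewrite /x mulrC divfK ?gt_eqF.
  have x_gt0 : 0 < x by rewrite /x divr_gt0 //; lra.
  have x_le1 : x <= 1.
    by rewrite -(ler_pM2l m_gt0) mx mulr1 /m; lra.
  exists x => //.
  have : a * x ^+ 2 <= `|a| * x.
    have : x ^+ 2 <= x by rewrite expr2 ger_pMr.
    nra.
  have : (`|a| + `|b|) * x < m * x by rewrite ltr_pM2r // /m; lra.
  nra.
- have [a0 | a_gt0] := eqVneq a 0.
    exists ((`|c| + 1) / b); first by rewrite divr_gt0 //; lra.
    by rewrite a0 mul0r add0r mulrC divfK ?gt_eqF //; lra.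
  have {}a_gt0 : 0 < a by rewrite lt_neqAle eq_sym a_gt0.
  exists (b / (2 * a)); first by rewrite divr_gt0 //; lra.
  have -> : a * (b / (2 * a)) ^+ 2 - b * (b / (2 * a)) + c
            = (4 * a * c - b ^+ 2) / (4 * a) by field; rewrite gt_eqF.
  by rewrite pmulr_llt0 ?invr_gt0; lra.
Qed.

Lemma mul2_sqrt_lt_norm (R : rcfType) (u y : R) :
  0 <= u -> (2 * Num.sqrt u < `|y|) = (4 * u < y ^+ 2).
Proof.
move=> u_ge0; rewrite -ltr_sqr ?nnegrE ?mulr_ge0 ?sqrtr_ge0 //.
by rewrite exprMn sqr_sqrtr // real_normK ?num_real // -natrX.
Qed.

Lemma sqrt_mul_lt (R : rcfType) (u v b : R) :
  0 <= u -> 0 <= v -> Num.sqrt u * Num.sqrt v < b -> 0 < b /\ u * v < b ^+ 2.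
Proof.
move=> u_ge0 v_ge0; rewrite -sqrtrM // => lt_b.
have b_gt0 : 0 < b := le_lt_trans (sqrtr_ge0 _) lt_b.
by split=> //; rewrite -ltr_sqrt ?exprn_gt0 // sqrtr_sqr gtr0_norm.
Qed.

Lemma mul_lt_sqr_tr_le0 (R : realDomainType) (p r q : R) :
  p + r <= 0 -> [\/ 0 < p, 0 < r | p * r < q ^+ 2] -> p * r < q ^+ 2.
Proof.
move=> tr_le0 [p_gt0 | r_gt0 | //]; have := sqr_ge0 q.
- suff : p * r < 0 by lra.
  by rewrite pmulr_rlt0 //; lra.
- suff : p * r < 0 by lra.
  by rewrite pmulr_llt0 //; lra.
Qed.

Section Reactive2.
Variable R : realType.
Implicit Types (M : 'M[R]_2) (l : R).

Lemma eigenvalue_herm_part_mx2 M l :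
  eigenvalue (herm_part M) l =
    ((l - M 0 0) * (l - M 1 1) == ((M 0 1 + M 1 0) / 2) ^+ 2).
Proof.
rewrite eigenvalue_mx2 mxtrace_mx2 det_mx2 /herm_part !mxE /= -[RHS]subr_eq0.
by congr (_ == 0); field.
Qed.

Lemma reactive_mx2P M :
  let p := M 0 0 in let r := M 1 1 in let q := (M 0 1 + M 1 0) / 2 in
  reactive M <-> [\/ 0 < p, 0 < r | p * r < q ^+ 2].
Proof.
move=> p r q; split.
  case=> l [l_gt0]; rewrite eigenvalue_herm_part_mx2 -/p -/r -/q => /eqP pq.
  have [p_gt0 | p_le0] := ltP 0 p; first exact: Or31.
  have [r_gt0 | r_le0] := ltP 0 r; first exact: Or32.
  by apply: Or33; nra.
pose s := Num.sqrt (((p - r) / 2) ^+ 2 + q ^+ 2).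
have s_ge0 : 0 <= s := sqrtr_ge0 _.
have s2 : s ^+ 2 = ((p - r) / 2) ^+ 2 + q ^+ 2 by rewrite sqr_sqrtr ?addr_ge0 ?sqr_ge0.
move=> reac; exists ((p + r) / 2 + s); split; last first.
  by rewrite eigenvalue_herm_part_mx2 -/p -/r -/q; apply/eqP; nra.
have [m_gt0 | m_le0] := ltP 0 ((p + r) / 2); first lra.
have pr_lt : p * r < q ^+ 2 by apply: mul_lt_sqr_tr_le0 reac; lra.
have : `|(p + r) / 2| < s.
  rewrite -ltr_sqr ?nnegrE // real_normK ?num_real // s2.
  have -> : ((p + r) / 2) ^+ 2 = ((p - r) / 2) ^+ 2 + p * r by field.
  lra.
have := ler_norm (- ((p + r) / 2)); rewrite normrN; lra.
Qed.

Lemma reactive_mx2_tr_lt0 M :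
  let p := M 0 0 in let r := M 1 1 in let q := (M 0 1 + M 1 0) / 2 in
  p + r < 0 -> reactive M <-> p * r < q ^+ 2.
Proof.
move=> p r q tr_lt0; rewrite reactive_mx2P; split; last exact: Or33.
by move=> reac; apply: mul_lt_sqr_tr_le0 reac; exact: ltW.
Qed.
End Reactive2.

Section Chemotaxis.
Variables (R : realType) (fu fv gu gv Du Dv beta l0 : R).
Hypotheses (Du_ge0 : 0 <= Du) (Dv_ge0 : 0 <= Dv) (trJ0_lt0 : fu + gv < 0).

Lemma reactive_Jk_sqrtE (x : R) : 0 <= x ->
  reactive (Jk fu fv gu gv Du Dv beta l0 (Num.sqrt x)) <->
  (Du * Dv - (beta * l0) ^+ 2 / 4) * x ^+ 2
    - (Du * gv + Dv * fu + (fv + gu) * (beta * l0) / 2) * x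
    + (fu * gv - (fv + gu) ^+ 2 / 4) < 0.
Proof.
move=> x_ge0; rewrite reactive_mx2_tr_lt0 /Jk /mx2 !mxE /= sqr_sqrtr //.
  rewrite -subr_lt0; set d := (X in X < 0 <-> _); set Q := (X in _ <-> X < 0).
  suff -> : d = Q by [].
  by rewrite /d /Q; field.
rewrite addrACA -opprD subr_lt0 (lt_le_trans trJ0_lt0) //.
by rewrite addr_ge0 ?mulr_ge0.
Qed.
End Chemotaxis.

Theorem proposition2 (R : realType) (fu fv gu gv Du Dv beta l0 : R) :
  0 < Du -> 0 < Dv -> 0 < beta ->
  fu + gv < 0 -> 0 < fu * gv - fv * gu ->
  let J0 := mx2 fu fv gu gv in
  let A := Du * gv + Dv * fu in
  let A1 := Num.sqrt (Du * Dv) in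
  let A2 := Num.sqrt (fu * gv - fv * gu) in
  let A3 := `|fv - gu| in
  (  2 * A1 < `|beta * l0|
  \/ (`|beta * l0| <= 2 * A1 /\ reactive J0)
  \/ (`|beta * l0| <= 2 * A1 /\ ~ reactive J0 /\
      Num.sqrt (A1 ^+ 2 - (beta ^+ 2 * l0 ^+ 2) / 4) * Num.sqrt (4 * A2 ^+ 2 - A3 ^+ 2)
        - (fv + gu) * beta * l0 / 2 < A /\ A < 0)) ->
  exists k : R, 0 < k /\ reactive (Jk fu fv gu gv Du Dv beta l0 k).
Proof.
move=> Du_gt0 Dv_gt0 _ trJ0_lt0 detJ0_gt0 J0 A A1 A2 A3 cases.
pose a := Du * Dv - (beta * l0) ^+ 2 / 4.
pose b := Du * gv + Dv * fu + (fv + gu) * (beta * l0) / 2.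
pose c := fu * gv - (fv + gu) ^+ 2 / 4.
have DuDv_ge0 : 0 <= Du * Dv by rewrite mulr_ge0 ?ltW.
have reactiveE := reactive_Jk_sqrtE fv gu beta l0 (ltW Du_gt0) (ltW Dv_gt0) trJ0_lt0.
have J0E : reactive J0 <-> c < 0.
  have -> : J0 = Jk fu fv gu gv Du Dv beta l0 (Num.sqrt 0).
    by rewrite sqrtr0 /Jk expr0n scale0r subr0.
  by rewrite reactiveE // expr0n /= !mulr0 subr0 add0r.
have a_lt0E : (2 * A1 < `|beta * l0|) = (a < 0).
  by rewrite mul2_sqrt_lt_norm //; apply/idP/idP; rewrite /a; lra.
suff [x x_gt0 quad_lt0] : exists2 x, 0 < x & a * x ^+ 2 - b * x + c < 0.
  by exists (Num.sqrt x); rewrite sqrtr_gt0 reactiveE ?ltW.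
apply: exists_pos_quad_lt0.
case: cases => [case1 | [[_ J0_reactive] | [small [J0_stable [bound _]]]]].
- by apply: Or31; rewrite -a_lt0E.
- exact/Or32/J0E.
have a_ge0 : 0 <= a by rewrite leNgt -a_lt0E -leNgt.
have c_ge0 : 0 <= c by rewrite leNgt; apply/negP => /J0E.
have a_eq : A1 ^+ 2 - beta ^+ 2 * l0 ^+ 2 / 4 = a by rewrite sqr_sqrtr // /a exprMn.
have c_eq : 4 * A2 ^+ 2 - A3 ^+ 2 = 4 * c.
  by rewrite sqr_sqrtr ?ltW // real_normK ?num_real // /c; field.
rewrite a_eq c_eq /A in bound.
have sqrt_lt_b : Num.sqrt a * Num.sqrt (4 * c) < b by rewrite /b; lra.
have [b_gt0 disc] := sqrt_mul_lt a_ge0 (mulr_ge0 (ler0n _ 4) c_ge0) sqrt_lt_b.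
by apply: Or33; split=> //; lra.
Qed.
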